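(* For every positive integer $n$ and every $u\in S_n$, \[ t^{\mathrm{des}(u)}q^{\mathrm{maj}(u)}\prod_{i=1}^n (1+tq^i) = \sum_{w \in B'(u)} t^{\mathrm{fdes}(w)}q^{\mathrm{fmaj}(w)}.\]
   Context: $S_n$ is the set of permutations of $[n]=\{1,\dots,n\}$, written as words $u=u_1\cdots u_n$. $B_n$ is the set of signed permutations: words $w=w_1\cdots w_n$ on the alphabet $\{\bar 1,1,\dots,\bar n,n\}$ (where $\bar i=-i$) such that $|w|:=|w_1|\cdots|w_n|$ is a permutation in $S_n$. The alphabet is totally ordered by $\bar 1<\bar 2<\cdots<\bar n<1<2<\cdots<n$. For a word $w$ over a totally ordered alphabet, $\mathrm{Des}(w)=\{i: w_i>w_{i+1}\}$, $\mathrm{des}(w)=|\mathrm{Des}(w)|$, and $\mathrm{maj}(w)=\sum_{i\in\mathrm{Des}(w)} i$. For $w\in B_n$: $\mathrm{fdes}(w)=2\,\mathrm{des}(w)+1$ if $w_1<0$ and $\mathrm{fdes}(w)=2\,\mathrm{des}(w)$ if $w_1>0$; $\mathrm{fmaj}(w)=2\,\mathrm{maj}(w)+|\{i:w_i<0\}|$. For $u\in S_n$, $B'(u)=\{w\in B_n: |w|=u\}$. *)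

From HB Require Import structures.
From mathcomp Require Import all_boot all_order all_algebra.
Set Implicit Arguments. Unset Strict Implicit. Unset Printing Implicit Defensive.
Import Order.TTheory GRing.Theory Num.Theory.

(* Descent set of a word w = w_1 ... w_m over an alphabet totally ordered by
   the strict order [lt]: positions i (1-indexed, 1 <= i < m) with
   w_i > w_{i+1}, i.e. lt w_{i+1} w_i. *)
Definition Des (T : Type) (x0 : T) (lt : T -> T -> bool) (w : seq T) : seq nat :=
  [seq i <- iota 1 (size w).-1 | lt (nth x0 w i) (nth x0 w i.-1)].
Definition des (T : Type) (x0 : T) (lt : T -> T -> bool) (w : seq T) : nat :=
  size (Des x0 lt w).
Definition maj (T : Type) (x0 : T) (lt : T -> T -> bool) (w : seq T) : nat :=
  sumn (Des x0 lt w).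

Definition desS (u : seq nat) : nat := des 0%N ltn u.
Definition majS (u : seq nat) : nat := maj 0%N ltn u.

(* Signed letters are nonzero integers, bar i = -i.  The total order
   bar 1 < bar 2 < ... < bar n < 1 < 2 < ... < n. *)
Definition ltB (a b : int) : bool :=
  if (a < 0)%R then (if (b < 0)%R then (`|a| < `|b|)%N else true)
  else (if (b < 0)%R then false else (`|a| < `|b|)%N).

Definition desB (w : seq int) : nat := des 0%R ltB w.
Definition majB (w : seq int) : nat := maj 0%R ltB w.
Definition negB (w : seq int) : nat := count (fun a : int => (a < 0)%R) w.

Definition fdes (w : seq int) : nat :=
  (2 * desB w + (head 0%R w < 0)%R)%N.
Definition fmaj (w : seq int) : nat := (2 * majB w + negB w)%N.

(* B'(u) = { w in B_n : |w| = u }.  A word w with |w| = u is determined by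
   the set of positions carrying a bar; [signword n u s] is the word whose
   i-th letter is bar u_i if s i and u_i otherwise.  s ranges over all
   sign choices, giving each element of B'(u) exactly once. *)
Definition signword (n : nat) (u : seq nat) (s : {ffun 'I_n -> bool}) : seq int :=
  [seq (if s i then - ((nth 0%N u i)%:Z) else (nth 0%N u i)%:Z)%R | i <- enum 'I_n].

From HB Require Import structures.
From mathcomp Require Import all_boot all_order all_algebra.
From mathcomp Require Import ring.
Import Order.TTheory GRing.Theory Num.Theory.
Set Implicit Arguments. Unset Strict Implicit. Unset Printing Implicit Defensive.

(* Fix a word u of positive letters and refine the right-hand
   side according to the sign of the LAST letter: summing the flag weight
   t^fdes q^fmaj over the signings of u whose last letter is unbarred gives
   t^des(u) q^maj(u) prod_{i<|u|} (1 + t q^i), and over those whose last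
   letter is barred gives the same times t q^|u|.  Adding the two halves is
   the theorem.  The refinement is proved by induction on u, appending one
   letter x after a last letter z: appending a letter to a word of length m
   multiplies the flag weight by (t q^m)^2 if it creates a descent, and by q
   if the new letter is barred; comparing signed letters reduces to comparing
   x and z, and a four-case polynomial identity closes the step. *)

Section AppendLetter.
Variables (T : Type) (x0 : T) (lt : T -> T -> bool).

Lemma Des_rcons w y : (0 < size w)%N ->
  Des x0 lt (rcons w y) =
  Des x0 lt w ++ (if lt y (last x0 w) then [:: size w] else [::]).
Proof.
move=> w0; have [k sw] : exists k, size w = k.+1 by exists (size w).-1; rewrite prednK.
rewrite /Des size_rcons sw succnK -[k.+1]addn1 iotaD filter_cat; congr (_ ++ _).
  rewrite addn1; apply: eq_in_filter => i; rewrite mem_iota => /andP[_ i_lt].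
  have i_le : (i < k.+1)%N by rewrite add1n in i_lt.
  by rewrite !nth_rcons sw i_le (leq_ltn_trans (leq_pred i) i_le).
by rewrite add1n addn1 /= !nth_rcons sw ltnn eqxx ltnSn -nth_last sw.
Qed.

Lemma des_rcons w y : (0 < size w)%N ->
  des x0 lt (rcons w y) = (des x0 lt w + lt y (last x0 w))%N.
Proof.
by move=> w0; rewrite /des Des_rcons // size_cat; case: (lt y _); rewrite ?addn0.
Qed.

Lemma maj_rcons w y : (0 < size w)%N ->
  maj x0 lt (rcons w y) = (maj x0 lt w + lt y (last x0 w) * size w)%N.
Proof.
by move=> w0; rewrite /maj Des_rcons // sumn_cat; case: (lt y _); rewrite /= ?mul1n ?addn0.
Qed.

End AppendLetter.

Definition signed (b : bool) (x : nat) : int := (if b then - x%:Z else x%:Z)%R.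

Lemma signed_lt0 b x : (0 < x)%N -> (signed b x < 0)%R = b.
Proof. by move=> x0; case: b; rewrite /signed ?oppr_lt0 ?ltz_nat // ltNge le0z_nat. Qed.

Lemma ltB_signed b c x z : (0 < x)%N -> (0 < z)%N ->
  ltB (signed b x) (signed c z) = if b == c then (x < z)%N else b.
Proof.
move=> x0 z0; rewrite /ltB !signed_lt0 //.
by case: b; case: c; rewrite /signed /= ?abszN.
Qed.

Lemma signwordE n u (s : {ffun 'I_n -> bool}) :
  signword u s = [seq signed (s i) (nth 0%N u i) | i <- enum 'I_n].
Proof. by []. Qed.

Lemma size_signword n u (s : {ffun 'I_n -> bool}) : size (signword u s) = n.
Proof. by rewrite size_map size_enum_ord. Qed.

Lemma last_signword n u (s : {ffun 'I_n.+1 -> bool}) :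
  last 0%R (signword u s) = signed (s ord_max) (nth 0%N u n).
Proof. by rewrite signwordE enum_ordSr map_rcons last_rcons. Qed.

Section ExtendLast.
Variables (T : finType) (n : nat).

Definition extend_last (b : T) (f : {ffun 'I_n -> T}) : {ffun 'I_n.+1 -> T} :=
  [ffun i => if unlift ord_max i is Some j then f j else b].

Definition restrict_last (s : {ffun 'I_n.+1 -> T}) : {ffun 'I_n -> T} :=
  [ffun j => s (lift ord_max j)].

Lemma extend_last_max b f : extend_last b f ord_max = b.
Proof. by rewrite ffunE unlift_none. Qed.

Lemma extend_lastK b : cancel (extend_last b) restrict_last.
Proof. by move=> f; apply/ffunP => j; rewrite !ffunE liftK. Qed.

Lemma restrict_lastK b (s : {ffun 'I_n.+1 -> T}) :
  s ord_max = b -> extend_last b (restrict_last s) = s.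
Proof.
move=> sb; apply/ffunP => i; rewrite ffunE.
by case: unliftP => [j ->|->]; rewrite ?ffunE.
Qed.

Lemma sum_last_fixed (R : nmodType) b (F : {ffun 'I_n.+1 -> T} -> R) :
  (\sum_(s : {ffun 'I_n.+1 -> T} | s ord_max == b) F s = \sum_f F (extend_last b f))%R.
Proof.
rewrite (reindex_onto (extend_last b) restrict_last) => [|s /eqP]; last first.
  exact: restrict_lastK.
by apply: eq_bigl => f; rewrite extend_last_max extend_lastK !eqxx.
Qed.

Lemma sum_by_last (R : nmodType) (F : {ffun 'I_n.+1 -> T} -> R) :
  (\sum_s F s = \sum_(c : T) \sum_(s : {ffun 'I_n.+1 -> T} | s ord_max == c) F s)%R.
Proof. exact: (partition_big (fun s : {ffun 'I_n.+1 -> T} => s ord_max) xpredT). Qed.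

End ExtendLast.

Lemma signword_rcons n u x b (f : {ffun 'I_n -> bool}) : size u = n ->
  signword (rcons u x) (extend_last b f) = rcons (signword u f) (signed b x).
Proof.
move=> su; rewrite !signwordE enum_ordSr map_rcons -map_comp extend_last_max.
rewrite nth_rcons su ltnn eqxx; congr rcons; apply: eq_map => i /=.
have -> : widen_ord (leqnSn n) i = lift ord_max i by apply: val_inj; exact: esym (lift_max i).
by rewrite ffunE liftK nth_rcons su ltn_ord.
Qed.

Section Weights.
Variables (R : comNzRingType) (t q : R).
Local Open Scope ring_scope.

Definition flag_weight (w : seq int) : R := t ^+ fdes w * q ^+ fmaj w.
Definition perm_weight (u : seq nat) : R := t ^+ desS u * q ^+ majS u.
Definition flag_product (n : nat) : R := \prod_(1 <= i < n.+1) (1 + t * q ^+ i).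

Lemma flag_productS n : flag_product n.+1 = flag_product n * (1 + t * q ^+ n.+1).
Proof. by rewrite /flag_product big_nat_recr. Qed.

Lemma flag_weight_rcons w y : (0 < size w)%N ->
  flag_weight (rcons w y) = flag_weight w
    * (t * q ^+ size w) ^+ (2 * ltB y (last 0 w)) * q ^+ (y < 0)%R.
Proof.
move=> w0; rewrite /flag_weight /fdes /fmaj /desB /majB des_rcons // maj_rcons //.
have -> : head 0 (rcons w y) = head 0 w by case: w w0.
rewrite /negB -cats1 count_cat /= addn0 exprMn -exprM.
by rewrite !mulnDr !exprD !(mulnC (size w)); ring.
Qed.

Lemma perm_weight_rcons u x : (0 < size u)%N ->
  perm_weight (rcons u x) = perm_weight u * (t * q ^+ size u) ^+ (x < last 0%N u)%N.
Proof.
move=> u0; rewrite /perm_weight /desS /majS des_rcons // maj_rcons //.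
by rewrite exprMn -exprM mulnC !exprD; ring.
Qed.

Lemma sum_flag_weight_single x b : (0 < x)%N ->
  \sum_(s : {ffun 'I_1 -> bool} | s ord_max == b) flag_weight (signword [:: x] s)
  = perm_weight [:: x] * flag_product 0 * (t * q ^+ 1) ^+ b.
Proof.
move=> x_pos; rewrite sum_last_fixed.
under eq_bigr => f _ do
  rewrite -[[:: x]]/(rcons [::] x) signword_rcons // (size0nil (size_signword _ f)).
rewrite sumr_const card_ffun card_bool card_ord mulr1n /flag_product big_geq //.
rewrite /flag_weight /perm_weight /fdes /fmaj /negB /= signed_lt0 //.
rewrite /desB /majB /desS /majS /des /maj /= muln0 add0n addn0 !expr0.
by rewrite mulr1 !mul1r exprMn expr1.
Qed.

Lemma sum_flag_weight_last n u b : size u = n.+1 -> 0%N \notin u ->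
  \sum_(s : {ffun 'I_n.+1 -> bool} | s ord_max == b) flag_weight (signword u s)
  = perm_weight u * flag_product n * (t * q ^+ n.+1) ^+ b.
Proof.
elim: n u b => [|n IH] u b.
  by case: u => [|x [|]] //= _; rewrite mem_seq1 eq_sym -lt0n; apply: sum_flag_weight_single.
case/lastP: u => [//|u x]; rewrite size_rcons => -[su].
rewrite mem_rcons in_cons negb_or eq_sym -lt0n => /andP[x_pos u0].
set z := nth 0%N u n; set X := t * q ^+ n.+1.
have last_u : last 0%N u = z by rewrite -nth_last su.
have z_pos : (0 < z)%N.
  by rewrite lt0n; apply: contraNneq u0 => <-; rewrite mem_nth ?su.
have sum_last c : \sum_(f : {ffun 'I_n.+1 -> bool} | f ord_max == c)
      flag_weight (signword u f) * X ^+ (2 * ltB (signed b x) (signed (f ord_max) z)) * q ^+ b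
    = perm_weight u * flag_product n * X ^+ c * X ^+ (2 * ltB (signed b x) (signed c z)) * q ^+ b.
  by rewrite -IH // !big_distrl; apply: eq_bigr => f /eqP ->.
rewrite sum_last_fixed.
under eq_bigr => f _ do rewrite signword_rcons // flag_weight_rcons ?size_signword //
  last_signword signed_lt0 //.
rewrite sum_by_last big_bool /= !sum_last !ltB_signed // perm_weight_rcons ?su // last_u.
rewrite flag_productS -/X exprSr [t * (_ * q)]mulrA -/X.
(* What remains is X^(2(b || d)) + X^(1 + 2(b && d)) = X^(b + d) (1 + X)
   for the descent indicator d = (x < z), checked case by case. *)
by clear sum_last; case: b; case: (x < z)%N; ring.
Qed.

End Weights.

Local Open Scope ring_scope.

Theorem theorem7 (n : nat) (u : seq nat) (R : comNzRingType) (t q : R) :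
  (0 < n)%N -> perm_eq u (iota 1 n) ->
  t ^+ desS u * q ^+ majS u * \prod_(1 <= i < n.+1) (1 + t * q ^+ i)
  = \sum_(s : {ffun 'I_n -> bool}) t ^+ fdes (signword u s) * q ^+ fmaj (signword u s).
Proof.
case: n => [//|n] _ u_perm.
have su : size u = n.+1 by rewrite (perm_size u_perm) size_iota.
have u0 : 0%N \notin u by rewrite (perm_mem u_perm) mem_iota.
change (perm_weight t q u * flag_product t q n.+1
  = \sum_(s : {ffun 'I_n.+1 -> bool}) flag_weight t q (signword u s)).
by rewrite sum_by_last big_bool /= !sum_flag_weight_last // flag_productS; ring.
Qed.
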